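(* Let $d=1$. There is a constant $C$ such that for every admissible ball (interval) $B$ and every $y\in B$, $$ r_B\int_{\mathbb R\setminus 2B}\Big|\int_0^1\frac{r\,\partial_y\big(\psi(r,x,y)\,e^{-\phi(r,x,y)^2}\big)}{1-r^2}\,d\rho(r)\Big|\,dx\le C.$$
   Context: For $x,y\in\mathbb R$ and $r\in(0,1)$: $$\phi(r,x,y)=\frac{ry-x}{\sqrt{1-r^2}},\qquad \psi(r,x,y)=\frac{rx-y}{\sqrt{1-r^2}}.$$ The measure $\rho$ on $(0,1)$ is $d\rho(r)=\dfrac{dr}{r\sqrt{-\log r}}$. A ball (interval) $B$ with centre $c_B$ and radius $r_B$ is admissible if $r_B\le\min(1,1/|c_B|)$. $2B$ denotes the ball with the same centre and radius $2r_B$. *)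

From Stdlib Require Import Reals Lra.
Open Scope R_scope.

Definition phi (r x y : R) : R := (r * y - x) / sqrt (1 - r ^ 2).
Definition psi (r x y : R) : R := (r * x - y) / sqrt (1 - r ^ 2).

Definition rho_density (r : R) : R := / (r * sqrt (- ln r)).

(* Admissible interval B = B(c, rB) in dimension 1: rB <= min(1, 1/|c|)
   (with 1/|0| = +infinity), written without division. *)
Definition admissible (c rB : R) : Prop := 0 < rB /\ rB <= 1 /\ rB * Rabs c <= 1.

(* Lebesgue integral over (0,1) of a function f that is Riemann integrable on
   every compact subinterval: absolute integrability (bounded integrals of |f|
   over compacts) and value l = limit of the integrals over [u,v] as
   u -> 0+, v -> 1-.  For such f this is exactly "f is Lebesgue integrable on
   (0,1) with integral l". *)
Definition integral01 (f : R -> R) (l : R) : Prop :=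
  (forall u v, 0 < u -> u <= v -> v < 1 -> inhabited (Riemann_integrable f u v)) /\
  (exists M, forall u v (pr : Riemann_integrable (fun t => Rabs (f t)) u v),
      0 < u -> u <= v -> v < 1 -> RiemannInt pr <= M) /\
  (forall eps, eps > 0 -> exists delta, delta > 0 /\
     forall u v (pr : Riemann_integrable f u v),
       0 < u -> u < delta -> 1 - delta < v -> v < 1 ->
       Rabs (RiemannInt pr - l) < eps).

(* Write [G = exp (- phi^2)], [sigma = sqrt (1 - r^2)] and [lambda = sqrt (- ln r)].
   Integrating by parts in [r], the integrand equals [bulk - boundary'] with
   [bulk = G / (2 sigma lambda^3) >= 0] and [boundary = r G / (sigma lambda)] vanishing at both
   ends of (0,1), so the inner integral is the improper integral of the nonnegative [bulk].  Since
   [sigma^2 (1 + phi^2) >= (1 - r) + (x - r y)^2 =: gap] and [exp (-z) (1 + z)^n <= n^n], one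
   gets [bulk <= 16 / gap^2].  Integrating this in [r], separately where [|x - r y| >= a/2] and
   where [1 - r >= a / (2 |y|)], bounds the inner integral by [64 / a^2 + 128 / (a sqrt (a rB))]
   with [a = |x - y| > rB], using [|y| rB <= 2] (admissibility); this is integrable in [x] over
   [|x - c| >= 2 rB] with integral [O(1 / rB)]. *)

From Stdlib Require Import Reals Lra Lia ClassicalEpsilon.
From Coquelicot Require Import Coquelicot.
Open Scope R_scope.

(** * Real-analysis preliminaries *)

Lemma Rdiv_le_cross (a b c d : R) : 0 < b -> 0 < d -> a * d <= c * b -> a / b <= c / d.
Proof.
  intros Hb Hd H. apply Rle_div_l; [lra|].
  unfold Rdiv. rewrite Rmult_assoc, (Rmult_comm (/ d)), <- Rmult_assoc.
  apply Rle_div_r; [lra|]. lra.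
Qed.

Lemma Rdiv_pow_antitone (c m g : R) (n : nat) :
  0 <= c -> 0 < m -> m <= g -> c / g ^ n <= c / m ^ n.
Proof.
  intros Hc Hm Hg. apply Rdiv_le_cross; [apply pow_lt; lra | apply pow_lt; lra|].
  apply Rmult_le_compat_l; [lra|]. apply pow_incr; lra.
Qed.

Lemma abs_le_one_plus_sq (p : R) : Rabs p <= 1 + p ^ 2.
Proof. rewrite <- (pow2_abs p). pose proof (Rabs_pos p). nra. Qed.

Lemma sq_ge_of_abs_ge (a w : R) : 0 <= a -> a <= Rabs w -> a ^ 2 <= w ^ 2.
Proof. intros Ha Hw. rewrite <- (pow2_abs w). apply pow_incr. lra. Qed.

Lemma abs_sub_mul_ge (x y t : R) : t <= 1 ->
  Rabs (x - y) - (1 - t) * Rabs y <= Rabs (x - t * y).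
Proof.
  intros Ht. pose proof (Rabs_triang (x - t * y) (- ((1 - t) * y))) as T.
  replace (x - t * y + - ((1 - t) * y)) with (x - y) in T by ring.
  rewrite Rabs_Ropp, Rabs_mult, (Rabs_right (1 - t)) in T by lra. lra.
Qed.

Lemma exp_pow (z : R) (n : nat) : exp z ^ n = exp (INR n * z).
Proof.
  induction n as [|n IH]; [now rewrite Rmult_0_l, exp_0|].
  rewrite S_INR, Rmult_plus_distr_r, Rmult_1_l, exp_plus, <- IH. simpl. ring.
Qed.

(* Raise [1 + z/n <= exp (z/n)] to the [n]-th power. *)
Lemma exp_neg_mul_pow_le (z : R) (n : nat) :
  0 <= z -> exp (- z) * (1 + z) ^ n <= INR n ^ n.
Proof.
  intros Hz. pose proof (exp_pos (- z)) as Hez.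
  assert (Hinv : exp (- z) * exp z = 1) by (rewrite <- exp_plus, Rplus_opp_l; apply exp_0).
  destruct n as [|n]; [simpl; pose proof (exp_ineq1_le z); nra|].
  set (m := INR (S n)). assert (Hm : 1 <= m) by (apply (le_INR 1); lia).
  assert (Hbase : 0 <= 1 + z <= m * exp (z / m)).
  { pose proof (exp_ineq1_le (z / m)) as He.
    assert (Hmz : m * (1 + z / m) = m + z) by (field; lra).
    split; [lra|]. apply Rle_trans with (m * (1 + z / m)); [lra|].
    apply Rmult_le_compat_l; lra. }
  apply Rle_trans with (exp (- z) * (m * exp (z / m)) ^ S n);
    [apply Rmult_le_compat_l; [lra | now apply pow_incr]|].
  rewrite Rpow_mult_distr, exp_pow. fold m.
  replace (m * (z / m)) with z by (field; lra).
  replace (exp (- z) * (m ^ S n * exp z)) with (m ^ S n * (exp (- z) * exp z)) by ring.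
  rewrite Hinv. lra.
Qed.

Lemma is_derive_mul_exp (f g : R -> R) (x df dg l : R) :
  is_derive f x df -> is_derive g x dg -> (df + f x * dg) * exp (g x) = l ->
  is_derive (fun t => f t * exp (g t)) x l.
Proof.
  intros Hf Hg <-.
  replace ((df + f x * dg) * exp (g x)) with (df * exp (g x) + f x * (dg * exp (g x))) by ring.
  apply (is_derive_mult f (fun t => exp (g t))); [exact Hf| |intros; apply Rmult_comm].
  apply (is_derive_comp exp g); [apply is_derive_exp | exact Hg].
Qed.

Lemma ex_derive_continuity_pt (f : R -> R) (x : R) :
  ex_derive f x -> continuity_pt f x.
Proof. intros [l Hl]. apply derivable_continuous_pt. exists l. now apply is_derive_Reals. Qed.

Lemma continuity_pt_of_local_lipschitz (f : R -> R) (x L delta : R) :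
  0 <= L -> 0 < delta ->
  (forall z, Rabs (z - x) < delta -> Rabs (f z - f x) <= L * Rabs (z - x)) ->
  continuity_pt f x.
Proof.
  intros HL Hd Hlip eps Heps.
  exists (Rmin delta (eps / (L + 1))). split.
  { apply Rmin_pos; [lra | apply Rdiv_lt_0_compat; lra]. }
  intros z [_ Hz]. simpl in *. unfold Rdist in *.
  pose proof (Rmin_l delta (eps / (L + 1))). pose proof (Rmin_r delta (eps / (L + 1))).
  eapply Rle_lt_trans; [apply Hlip; lra|].
  apply Rle_lt_trans with ((L + 1) * Rabs (z - x)); [pose proof (Rabs_pos (z - x)); nra|].
  replace eps with ((L + 1) * (eps / (L + 1))) by (field; lra).
  apply Rmult_lt_compat_l; lra.
Qed.

Lemma RiemannInt_FTC (f F : R -> R) (a b : R) (pr : Riemann_integrable f a b) :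
  a <= b -> (forall t, a <= t <= b -> continuity_pt f t) ->
  (forall t, a <= t <= b -> is_derive F t (f t)) ->
  RiemannInt pr = F b - F a.
Proof.
  intros Hab Hc HF.
  rewrite (RiemannInt_P20 Hab (FTC_P1 Hab Hc) pr).
  assert (HF' : antiderivative f F a b).
  { split; [|exact Hab]. intros t Ht.
    exists (exist _ (f t) (proj1 (is_derive_Reals _ _ _) (HF t Ht))).
    symmetry. apply derive_pt_eq_0. now apply is_derive_Reals, HF. }
  destruct (antiderivative_Ucte f _ _ _ _ (RiemannInt_P29 Hab Hc) HF') as [C HC].
  rewrite (HC b), (HC a); lra.
Qed.

Lemma RiemannInt_le_antiderivative (f g G : R -> R) (a b : R)
    (pr : Riemann_integrable f a b) :
  a <= b -> (forall t, a <= t <= b -> continuity_pt g t) ->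
  (forall t, a <= t <= b -> is_derive G t (g t)) ->
  (forall t, a < t < b -> f t <= g t) ->
  RiemannInt pr <= G b - G a.
Proof.
  intros Hab Hc HG Hfg.
  pose proof (continuity_implies_RiemannInt Hab Hc) as prg.
  rewrite <- (RiemannInt_FTC g G a b prg Hab Hc HG).
  now apply RiemannInt_P19.
Qed.

Lemma RiemannInt_ge0 (f : R -> R) (a b : R) (pr : Riemann_integrable f a b) :
  a <= b -> (forall t, a < t < b -> 0 <= f t) -> 0 <= RiemannInt pr.
Proof.
  intros Hab Hf. pose proof (RiemannInt_P15 (RiemannInt_P14 a b 0)) as E0.
  rewrite Rmult_0_l in E0. rewrite <- E0. now apply RiemannInt_P19.
Qed.

Lemma RiemannInt_dist_le (f g : R -> R) (a b K : R)
    (prf : Riemann_integrable f a b) (prg : Riemann_integrable g a b) :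
  a <= b -> (forall t, a < t < b -> Rabs (f t - g t) <= K) ->
  Rabs (RiemannInt prf - RiemannInt prg) <= K * (b - a).
Proof.
  intros Hab HK. pose proof (RiemannInt_P10 (-1) prf prg) as prd.
  replace (RiemannInt prf - RiemannInt prg) with (RiemannInt prd)
    by (rewrite (RiemannInt_P12 prf prg prd Hab); ring).
  eapply Rle_trans; [apply (RiemannInt_P17 prd (RiemannInt_P16 prd) Hab)|].
  apply (RiemannInt_const_bound (l := 0) (RiemannInt_P16 prd) Hab). intros t Ht.
  split; [apply Rabs_pos|]. replace (f t + -1 * g t) with (f t - g t) by ring. now apply HK.
Qed.

(** * Improper integrals over (0,1) *)

(* The third clause of [integral01]. *)
Definition improper_int01 (h : R -> R) (l : R) : Prop :=
  forall eps, eps > 0 -> exists delta, delta > 0 /\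
    forall u v (pr : Riemann_integrable h u v),
      0 < u -> u < delta -> 1 - delta < v -> v < 1 ->
      Rabs (RiemannInt pr - l) < eps.

(* Junk value [0] when the improper integral does not exist. *)
Definition int01 (h : R -> R) : R := epsilon (inhabits 0) (improper_int01 h).

Lemma int01_spec (h : R -> R) :
  (exists l, improper_int01 h l) -> improper_int01 h (int01 h).
Proof. apply epsilon_spec. Qed.

Lemma Riemann_integrable_open01 (h : R -> R) (u v : R) :
  (forall t, 0 < t < 1 -> continuity_pt h t) ->
  0 < u -> u <= v -> v < 1 -> Riemann_integrable h u v.
Proof. intros Hc Hu Huv Hv. apply continuity_implies_RiemannInt; [lra|]. intros; apply Hc; lra. Qed.

(* The limit is the supremum of the integrals over compact subintervals. *)
Lemma improper_int01_exists (h : R -> R) (M : R) :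
  (forall t, 0 < t < 1 -> continuity_pt h t) ->
  (forall t, 0 < t < 1 -> 0 <= h t <= M) ->
  exists l, improper_int01 h l.
Proof.
  intros Hc Hb.
  assert (Hnonneg : forall a b (pr : Riemann_integrable h a b),
            0 < a -> a <= b -> b < 1 -> 0 <= RiemannInt pr <= M * (b - a)).
  { intros a b pr Ha Hab Hb1.
    pose proof (RiemannInt_const_bound (l := 0) (u := M) pr Hab) as H.
    rewrite Rmult_0_l in H. apply H. intros t Ht. apply Hb. lra. }
  assert (HM : 0 <= M) by (pose proof (Hb (1/2)); lra).
  set (E := fun s => exists a b (pr : Riemann_integrable h a b),
              0 < a /\ a <= b /\ b < 1 /\ s = RiemannInt pr).
  destruct (completeness E) as [l [Hub Hlub]].
  { exists M. intros s (a & b & pr & Ha & Hab & Hb1 & ->).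
    pose proof (Hnonneg a b pr Ha Hab Hb1). nra. }
  { exists (RiemannInt (Riemann_integrable_open01 h (1/2) (1/2) Hc
                           ltac:(lra) ltac:(lra) ltac:(lra))).
    do 3 eexists. repeat split; [lra | lra | lra]. }
  exists l. intros eps Heps.
  assert (Hclose : exists s, E s /\ l - eps < s).
  { apply NNPP. intros Hn.
    assert (is_upper_bound E (l - eps)).
    { intros s Hs. apply Rnot_lt_le. intros Hlt. apply Hn. now exists s. }
    pose proof (Hlub _ H). lra. }
  destruct Hclose as [s [(a & b & pr0 & Ha & Hab & Hb1 & ->) Hs]].
  exists (Rmin a (1 - b)). split; [apply Rmin_pos; lra|].
  intros u v pr Hu Hua Hbv Hv.
  pose proof (Rmin_l a (1 - b)). pose proof (Rmin_r a (1 - b)).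
  assert (Hupper : RiemannInt pr <= l) by (apply Hub; exists u, v, pr; repeat split; lra).
  pose proof (Riemann_integrable_open01 h u a Hc Hu ltac:(lra) ltac:(lra)) as pr1.
  pose proof (Riemann_integrable_open01 h a v Hc Ha ltac:(lra) Hv) as pr2.
  pose proof (Riemann_integrable_open01 h b v Hc ltac:(lra) ltac:(lra) Hv) as pr3.
  pose proof (RiemannInt_P26 pr1 pr2 pr) as E1.
  pose proof (RiemannInt_P26 pr0 pr3 pr2) as E2.
  pose proof (Hnonneg u a pr1 Hu ltac:(lra) ltac:(lra)).
  pose proof (Hnonneg b v pr3 ltac:(lra) ltac:(lra) Hv).
  apply Rabs_def1; lra.
Qed.

Lemma improper_int01_dist_le (h1 h2 : R -> R) (l1 l2 K : R) :
  (forall t, 0 < t < 1 -> continuity_pt h1 t) ->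
  (forall t, 0 < t < 1 -> continuity_pt h2 t) ->
  improper_int01 h1 l1 -> improper_int01 h2 l2 ->
  (forall u v (pr1 : Riemann_integrable h1 u v) (pr2 : Riemann_integrable h2 u v),
     0 < u -> u <= v -> v < 1 -> Rabs (RiemannInt pr1 - RiemannInt pr2) <= K) ->
  Rabs (l1 - l2) <= K.
Proof.
  intros Hc1 Hc2 Hl1 Hl2 HK. apply Rnot_lt_le. intros Hlt.
  set (e := (Rabs (l1 - l2) - K) / 2).
  destruct (Hl1 e) as [d1 [Hd1 Hdd1]]; [unfold e; lra|].
  destruct (Hl2 e) as [d2 [Hd2 Hdd2]]; [unfold e; lra|].
  set (u := Rmin (Rmin d1 d2) (1/2) / 2).
  assert (Hu : 0 < u /\ u < d1 /\ u < d2 /\ u <= 1/4)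
    by (unfold u, Rmin; repeat destruct Rle_dec; lra).
  pose proof (Riemann_integrable_open01 h1 u (1 - u) Hc1 ltac:(lra) ltac:(lra) ltac:(lra)) as pr1.
  pose proof (Riemann_integrable_open01 h2 u (1 - u) Hc2 ltac:(lra) ltac:(lra) ltac:(lra)) as pr2.
  specialize (Hdd1 u (1 - u) pr1 ltac:(lra) ltac:(lra) ltac:(lra) ltac:(lra)).
  specialize (Hdd2 u (1 - u) pr2 ltac:(lra) ltac:(lra) ltac:(lra) ltac:(lra)).
  specialize (HK u (1 - u) pr1 pr2 ltac:(lra) ltac:(lra) ltac:(lra)).
  pose proof (Rabs_triang (l1 - RiemannInt pr1) (RiemannInt pr1 - RiemannInt pr2)).
  pose proof (Rabs_triang (l1 - RiemannInt pr2) (RiemannInt pr2 - l2)).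
  replace (l1 - RiemannInt pr1 + (RiemannInt pr1 - RiemannInt pr2))
    with (l1 - RiemannInt pr2) in * by ring.
  replace (l1 - RiemannInt pr2 + (RiemannInt pr2 - l2)) with (l1 - l2) in * by ring.
  rewrite Rabs_minus_sym in Hdd1. unfold e in *. lra.
Qed.

Lemma improper_int01_abs_le (h : R -> R) (l K : R) :
  (forall t, 0 < t < 1 -> continuity_pt h t) -> improper_int01 h l ->
  (forall u v (pr : Riemann_integrable h u v),
     0 < u -> u <= v -> v < 1 -> Rabs (RiemannInt pr) <= K) ->
  Rabs l <= K.
Proof.
  intros Hc Hl HK. rewrite <- (Rminus_0_r l).
  apply (improper_int01_dist_le h (fun _ => 0)); auto.
  - intros; apply continuity_pt_const; now intros ? ?.
  - intros eps Heps. exists 1. split; [lra|]. intros u v pr _ _ _ _.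
    pose proof (RiemannInt_P15 (c := 0) pr) as E0. unfold fct_cte in E0.
    rewrite E0, Rmult_0_l, Rminus_0_r, Rabs_R0. lra.
  - intros u v pr1 pr2 Hu Huv Hv.
    pose proof (RiemannInt_P15 (c := 0) pr2) as E0. unfold fct_cte in E0.
    rewrite E0, Rmult_0_l, Rminus_0_r. now apply HK.
Qed.

Lemma integral01_ext (f g : R -> R) (l : R) :
  (forall r, 0 < r < 1 -> f r = g r) -> integral01 f l -> integral01 g l.
Proof.
  intros Hfg [Hi [[M HM] Hl]].
  assert (Hext : forall u v, 0 < u -> u <= v -> v < 1 ->
                   forall t, Rmin u v <= t <= Rmax u v -> f t = g t).
  { intros u v Hu Huv Hv t Ht. rewrite Rmin_left, Rmax_right in Ht by lra. apply Hfg. lra. }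
  split; [|split].
  - intros u v Hu Huv Hv. destruct (Hi u v Hu Huv Hv) as [pr].
    exact (inhabits (@Riemann_integrable_ext f g u v (Hext u v Hu Huv Hv) pr)).
  - exists M. intros u v pr Hu Huv Hv. destruct (Hi u v Hu Huv Hv) as [prf].
    rewrite <- (RiemannInt_P18 (RiemannInt_P16 prf) pr Huv); [now apply HM|].
    intros t Ht. rewrite Hfg by lra. reflexivity.
  - intros eps Heps. destruct (Hl eps Heps) as [d [Hd Hdd]].
    pose proof (Rmin_l d (1 / 2)). pose proof (Rmin_r d (1 / 2)).
    exists (Rmin d (1 / 2)). split; [apply Rmin_pos; lra|].
    intros u v pr Hu Hud Hvd Hv. assert (Huv : u <= v) by lra.
    destruct (Hi u v Hu Huv Hv) as [prf].
    rewrite <- (RiemannInt_P18 prf pr Huv); [apply Hdd; lra|].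
    intros t Ht. apply Hfg. lra.
Qed.

(** * The integrand and its integration by parts in r *)

Definition sigma (r : R) : R := sqrt (1 - r ^ 2).
Definition lambda (r : R) : R := sqrt (- ln r).
Definition gauss (x y r : R) : R := exp (- phi r x y ^ 2).
Definition dpsi_gauss (x y r : R) : R :=
  (- / sigma r - 2 * r * psi r x y * phi r x y / sigma r) * gauss x y r.
Definition kernel (x y r : R) : R := r * dpsi_gauss x y r / (1 - r ^ 2) * rho_density r.
Definition bulk (x y r : R) : R := / (2 * sigma r * lambda r ^ 3) * gauss x y r.
Definition boundary (x y r : R) : R := r / (sigma r * lambda r) * gauss x y r.

Lemma sigma_spec (r : R) : 0 < r < 1 -> 0 < sigma r /\ sigma r ^ 2 = 1 - r ^ 2.
Proof.
  intros Hr. unfold sigma. split; [apply sqrt_lt_R0; nra|].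
  rewrite <- Rsqr_pow2. apply Rsqr_sqrt. nra.
Qed.

Lemma lambda_spec (r : R) : 0 < r < 1 -> 0 < lambda r /\ lambda r ^ 2 = - ln r.
Proof.
  intros Hr. assert (ln r < 0) by (rewrite <- ln_1; apply ln_increasing; lra).
  unfold lambda. split; [apply sqrt_lt_R0; lra|].
  rewrite <- Rsqr_pow2. apply Rsqr_sqrt. lra.
Qed.

Lemma dpsi_gauss_spec (x y r : R) : 0 < r < 1 ->
  is_derive (fun y' => psi r x y' * exp (- phi r x y' ^ 2)) y (dpsi_gauss x y r).
Proof.
  intros Hr. destruct (sigma_spec r Hr) as [HS _].
  eapply (is_derive_mul_exp (psi r x) (fun y' => - phi r x y' ^ 2));
    unfold psi, phi; fold (sigma r); [auto_derive; [easy|reflexivity] ..|].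
  unfold dpsi_gauss, gauss, phi, psi. fold (sigma r). field. lra.
Qed.

Lemma boundary_derive (x y r : R) : 0 < r < 1 ->
  is_derive (boundary x y) r (bulk x y r - kernel x y r).
Proof.
  intros Hr. destruct (sigma_spec r Hr) as [HS HS2]. destruct (lambda_spec r Hr) as [HL HL2].
  eapply (is_derive_mul_exp (fun t => t / (sigma t * lambda t)) (fun t => - phi t x y ^ 2));
    unfold phi, sigma, lambda.
  all: try (auto_derive; change (sqrt (1 + - (r * (r * 1)))) with (sigma r);
             change (sqrt (- ln r)) with (lambda r);
             [repeat split; try nra; apply Rmult_integral_contrapositive; lra | reflexivity]).
  change (sqrt (1 - r ^ 2)) with (sigma r). change (sqrt (- ln r)) with (lambda r).
  unfold bulk, kernel, dpsi_gauss, gauss, rho_density, phi, psi.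
  change (sqrt (1 - r ^ 2)) with (sigma r). change (sqrt (- ln r)) with (lambda r).
  rewrite <- HS2. field_simplify_eq; [|repeat split; try lra; try nra].
  (* Only even powers of [sigma] are left. *)
  replace (sigma r ^ 4) with ((sigma r ^ 2) ^ 2) by ring. rewrite HS2. ring.
Qed.

Ltac open01_side :=
  repeat split;
  try match goal with |- _ <> 0 => apply Rgt_not_eq end;
  repeat (apply Rmult_lt_0_compat || apply pow_lt); nra.

Lemma bulk_continuity_pt (x y r : R) : 0 < r < 1 -> continuity_pt (bulk x y) r.
Proof.
  intros Hr. destruct (sigma_spec r Hr) as [HS _]. destruct (lambda_spec r Hr) as [HL HL2].
  apply ex_derive_continuity_pt. unfold bulk, gauss, phi, sigma, lambda. auto_derive.
  change (sqrt (1 + - (r * (r * 1)))) with (sigma r); change (sqrt (- ln r)) with (lambda r).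
  open01_side.
Qed.

Lemma kernel_continuity_pt (x y r : R) : 0 < r < 1 -> continuity_pt (kernel x y) r.
Proof.
  intros Hr. destruct (sigma_spec r Hr) as [HS _]. destruct (lambda_spec r Hr) as [HL HL2].
  apply ex_derive_continuity_pt.
  unfold kernel, dpsi_gauss, rho_density, gauss, phi, psi, sigma, lambda. auto_derive.
  change (sqrt (1 + - (r * (r * 1)))) with (sigma r); change (sqrt (- ln r)) with (lambda r).
  open01_side.
Qed.

Lemma bulk_derive_x (x y r : R) : 0 < r < 1 ->
  is_derive (fun x' => bulk x' y r) x (phi r x y * gauss x y r / (sigma r ^ 2 * lambda r ^ 3)).
Proof.
  intros Hr. destruct (sigma_spec r Hr) as [HS _]. destruct (lambda_spec r Hr) as [HL _].
  eapply (is_derive_mul_exp (fun _ => / (2 * sigma r * lambda r ^ 3))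
                            (fun x' => - phi r x' y ^ 2));
    unfold phi; fold (sigma r); [auto_derive; [easy|reflexivity] ..|].
  unfold gauss, phi. fold (sigma r). field. lra.
Qed.

Lemma kernel_eq_integrand (D : R -> R -> R -> R) (x y r : R) :
  (forall r x y, 0 < r < 1 ->
     derivable_pt_lim (fun y' => psi r x y' * exp (- (phi r x y') ^ 2)) y (D r x y)) ->
  0 < r < 1 -> kernel x y r = r * D r x y / (1 - r ^ 2) * rho_density r.
Proof.
  intros HD Hr. unfold kernel.
  now rewrite (uniqueness_limite _ y _ _ (HD r x y Hr)
                 (proj1 (is_derive_Reals _ _ _) (dpsi_gauss_spec x y r Hr))).
Qed.

Lemma RiemannInt_kernel (x y u v : R) (prk : Riemann_integrable (kernel x y) u v)
    (prb : Riemann_integrable (bulk x y) u v) :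
  0 < u -> u <= v -> v < 1 ->
  RiemannInt prk = RiemannInt prb - (boundary x y v - boundary x y u).
Proof.
  intros Hu Huv Hv.
  pose proof (RiemannInt_P10 (-1) prb prk) as prd.
  rewrite <- (RiemannInt_FTC _ (boundary x y) u v prd Huv).
  - rewrite (RiemannInt_P12 prb prk prd Huv). ring.
  - intros t Ht. apply continuity_pt_plus; [apply bulk_continuity_pt; lra|].
    apply continuity_pt_scal, kernel_continuity_pt; lra.
  - intros t Ht. replace (bulk x y t + -1 * kernel x y t) with (bulk x y t - kernel x y t) by ring.
    apply boundary_derive; lra.
Qed.

(** * Pointwise bounds *)

Definition gap (x y r : R) : R := (1 - r) + (x - r * y) ^ 2.

Lemma sigma_le (r : R) : 0 < r < 1 ->
  1 - r <= sigma r ^ 2 <= 2 * (1 - r) /\ sigma r <= 1 /\ sigma r <= 2 * lambda r.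
Proof.
  intros Hr. destruct (sigma_spec r Hr) as [HS HS2]. destruct (lambda_spec r Hr) as [HL HL2].
  assert (Hln : 1 - r <= - ln r)
    by (pose proof (exp_ineq1_le (ln r)) as H; rewrite exp_ln in H; lra).
  repeat split; try nra.
Qed.

Lemma sigma_cube_le (r : R) : 0 < r < 1 -> sigma r ^ 3 <= 8 * lambda r ^ 3.
Proof.
  intros Hr. destruct (sigma_le r Hr) as (_ & _ & HSL). destruct (sigma_spec r Hr) as [HS _].
  replace (8 * lambda r ^ 3) with ((2 * lambda r) ^ 3) by ring. apply pow_incr. lra.
Qed.

Lemma phi_mul_sigma (x y r : R) : 0 < r < 1 -> phi r x y * sigma r = r * y - x.
Proof. intros Hr. destruct (sigma_spec r Hr). unfold phi. fold (sigma r). field. lra. Qed.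

Lemma psi_eq (x y r : R) : 0 < r < 1 -> psi r x y = - r * phi r x y - y * sigma r.
Proof.
  intros Hr. destruct (sigma_spec r Hr) as [HS HS2].
  unfold psi, phi. fold (sigma r). field_simplify_eq; [|lra]. rewrite HS2. ring.
Qed.

Lemma gap_le (x y r : R) : 0 < r < 1 ->
  gap x y r <= sigma r ^ 2 * (1 + phi r x y ^ 2).
Proof.
  intros Hr. pose proof (sigma_le r Hr). pose proof (phi_mul_sigma x y r Hr) as Hp.
  unfold gap. replace ((x - r * y) ^ 2) with ((phi r x y * sigma r) ^ 2) by (rewrite Hp; ring).
  nra.
Qed.

Lemma gap_pos (x y r : R) : r < 1 -> 0 < gap x y r.
Proof. intros Hr. unfold gap. pose proof (pow2_ge_0 (x - r * y)). lra. Qed.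

Lemma gauss_gap_le (n k : nat) (x y r : R) : 0 < r < 1 ->
  gauss x y r * (1 + phi r x y ^ 2) ^ n * gap x y r ^ k
    <= INR (n + k) ^ (n + k) * sigma r ^ (2 * k).
Proof.
  intros Hr. pose proof (gap_le x y r Hr) as Hgap. unfold gauss.
  set (z := phi r x y ^ 2) in *. assert (Hz : 0 <= z) by apply pow2_ge_0.
  pose proof (exp_pos (- z)). pose proof (pow_le (1 + z) n ltac:(lra)).
  assert (Hgk : gap x y r ^ k <= sigma r ^ (2 * k) * (1 + z) ^ k).
  { rewrite pow_mult, <- Rpow_mult_distr. apply pow_incr.
    split; [apply Rlt_le, gap_pos|]; lra. }
  apply Rle_trans with (exp (- z) * (1 + z) ^ n * (sigma r ^ (2 * k) * (1 + z) ^ k));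
    [apply Rmult_le_compat_l; [apply Rmult_le_pos|]; lra|].
  replace (exp (- z) * (1 + z) ^ n * (sigma r ^ (2 * k) * (1 + z) ^ k))
    with (exp (- z) * (1 + z) ^ (n + k) * sigma r ^ (2 * k)) by (rewrite pow_add; ring).
  apply Rmult_le_compat_r; [apply pow_le; destruct (sigma_spec r Hr); lra|].
  now apply exp_neg_mul_pow_le.
Qed.

Lemma bulk_le (x y r : R) : 0 < r < 1 -> 0 <= bulk x y r <= 16 / gap x y r ^ 2.
Proof.
  intros Hr. destruct (sigma_spec r Hr) as [HS _]. destruct (lambda_spec r Hr) as [HL _].
  pose proof (sigma_cube_le r Hr). pose proof (gap_pos x y r ltac:(lra)) as Hg.
  pose proof (gauss_gap_le 0 2 x y r Hr) as HE.
  replace (INR (0 + 2) ^ (0 + 2)) with 4 in HE by (simpl; ring).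
  change (2 * 2)%nat with 4%nat in HE. rewrite pow_O, Rmult_1_r in HE.
  assert (HE0 : 0 < gauss x y r) by apply exp_pos.
  assert (HD : 0 < 2 * sigma r * lambda r ^ 3)
    by (apply Rmult_lt_0_compat; [lra | apply pow_lt; lra]).
  replace (bulk x y r) with (gauss x y r / (2 * sigma r * lambda r ^ 3))
    by (unfold bulk, Rdiv; ring).
  split; [apply Rlt_le, Rdiv_lt_0_compat; lra|].
  apply Rdiv_le_cross; [lra | apply pow_lt; lra | nra].
Qed.

Lemma kernel_eq (x y r : R) : 0 < r < 1 ->
  kernel x y r = - ((1 + 2 * r * psi r x y * phi r x y) * gauss x y r)
                 / (sigma r ^ 3 * lambda r).
Proof.
  intros Hr. destruct (sigma_spec r Hr) as [HS HS2]. destruct (lambda_spec r Hr) as [HL _].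
  unfold kernel, dpsi_gauss, rho_density. fold (lambda r). rewrite <- HS2. field. lra.
Qed.

Lemma one_plus_psi_phi_abs_le (x y r : R) : 0 < r < 1 ->
  Rabs (1 + 2 * r * psi r x y * phi r x y) <= 2 * (1 + Rabs y) * (1 + phi r x y ^ 2).
Proof.
  intros Hr. destruct (sigma_spec r Hr) as [HS _]. destruct (sigma_le r Hr) as (_ & HS1 & _).
  pose proof (abs_le_one_plus_sq (phi r x y)) as Hp.
  rewrite (psi_eq x y r Hr).
    replace (1 + 2 * r * (- r * phi r x y - y * sigma r) * phi r x y)
      with (1 - 2 * r ^ 2 * phi r x y ^ 2 - 2 * r * sigma r * (y * phi r x y)) by ring.
    eapply Rle_trans; [apply Rabs_triang|]. rewrite Rabs_Ropp.
    eapply Rle_trans; [apply Rplus_le_compat_r, Rabs_triang|]. rewrite Rabs_Ropp.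
    rewrite Rabs_R1, !Rabs_mult, (Rabs_right 2), (Rabs_right r), (Rabs_right (sigma r)),
      (Rabs_right (phi r x y ^ 2)), (Rabs_right (r ^ 2)) by
      (try apply Rle_ge; try apply pow2_ge_0; lra).
    pose proof (Rabs_pos y). pose proof (Rabs_pos (phi r x y)). pose proof (pow2_ge_0 (phi r x y)).
    assert (2 * r ^ 2 * phi r x y ^ 2 <= 2 * phi r x y ^ 2) by (assert (r ^ 2 <= 1) by nra; nra).
    assert (2 * r * sigma r * (Rabs y * Rabs (phi r x y)) <= 2 * (Rabs y * Rabs (phi r x y))) by
      (apply Rmult_le_compat_r; [apply Rmult_le_pos|]; nra).
    assert (Rabs y * Rabs (phi r x y) <= Rabs y * (1 + phi r x y ^ 2))
      by (apply Rmult_le_compat_l; lra).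
    nra.
Qed.

Lemma kernel_abs_le (x y r : R) : 0 < r < 1 ->
  Rabs (kernel x y r) <= 108 * (1 + Rabs y) / gap x y r ^ 2.
Proof.
  intros Hr. destruct (sigma_spec r Hr) as [HS _]. destruct (lambda_spec r Hr) as [HL _].
  destruct (sigma_le r Hr) as (_ & HS1 & HSL). pose proof (gap_pos x y r ltac:(lra)) as Hg.
  pose proof (gauss_gap_le 1 2 x y r Hr) as HE.
  replace (INR (1 + 2) ^ (1 + 2)) with 27 in HE by (simpl; ring).
  change (2 * 2)%nat with 4%nat in HE. rewrite pow_1 in HE.
  assert (HE0 : 0 < gauss x y r) by apply exp_pos.
  pose proof (one_plus_psi_phi_abs_le x y r Hr) as Hq.
  assert (HD : 0 < sigma r ^ 3 * lambda r) by (apply Rmult_lt_0_compat; [apply pow_lt|]; lra).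
  rewrite (kernel_eq x y r Hr), Rabs_div, Rabs_Ropp, Rabs_mult, (Rabs_right (gauss x y r)),
    (Rabs_right (sigma r ^ 3 * lambda r)) by lra.
  apply Rdiv_le_cross; [lra | apply pow_lt; lra|].
  assert (HS4 : sigma r ^ 4 <= 2 * (sigma r ^ 3 * lambda r)).
  { replace (sigma r ^ 4) with (sigma r ^ 3 * sigma r) by ring.
    pose proof (pow_lt _ 3 HS). nra. }
  pose proof (Rabs_pos (1 + 2 * r * psi r x y * phi r x y)).
  pose proof (Rabs_pos y). pose proof (pow_lt _ 2 Hg).
  apply Rle_trans with (2 * (1 + Rabs y) * (gauss x y r * (1 + phi r x y ^ 2) * gap x y r ^ 2)).
  - replace (2 * (1 + Rabs y) * (gauss x y r * (1 + phi r x y ^ 2) * gap x y r ^ 2))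
      with (2 * (1 + Rabs y) * (1 + phi r x y ^ 2) * (gauss x y r * gap x y r ^ 2)) by ring.
    rewrite Rmult_assoc. apply Rmult_le_compat_r; [nra|]. lra.
  - nra.
Qed.

Lemma boundary_le (x y r : R) : 0 < r < 1 ->
  0 <= boundary x y r <= 16 * r * (1 - r) / gap x y r ^ 2.
Proof.
  intros Hr. destruct (sigma_spec r Hr) as [HS _]. destruct (lambda_spec r Hr) as [HL _].
  destruct (sigma_le r Hr) as ([_ HS2] & _ & HSL). pose proof (gap_pos x y r ltac:(lra)) as Hg.
  pose proof (gauss_gap_le 0 2 x y r Hr) as HE.
  replace (INR (0 + 2) ^ (0 + 2)) with 4 in HE by (simpl; ring).
  change (2 * 2)%nat with 4%nat in HE. rewrite pow_O, Rmult_1_r in HE.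
  assert (HE0 : 0 < gauss x y r) by apply exp_pos.
  replace (boundary x y r) with (r * gauss x y r / (sigma r * lambda r))
    by (unfold boundary, Rdiv; ring).
  split; [apply Rlt_le, Rdiv_lt_0_compat; nra|].
  apply Rdiv_le_cross; [nra | apply pow_lt; lra|].
  assert (sigma r ^ 4 <= 4 * (1 - r) * (sigma r * lambda r)).
  { replace (sigma r ^ 4) with (sigma r ^ 2 * (sigma r * sigma r)) by ring.
    replace (4 * (1 - r) * (sigma r * lambda r)) with (2 * (1 - r) * (sigma r * (2 * lambda r)))
      by ring.
    apply Rmult_le_compat; [apply pow2_ge_0 | nra | lra | apply Rmult_le_compat_l; lra]. }
  nra.
Qed.

Lemma bulk_dx_abs_le (x y r : R) : 0 < r < 1 ->
  Rabs (phi r x y * gauss x y r / (sigma r ^ 2 * lambda r ^ 3)) <= 2048 / gap x y r ^ 3.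
Proof.
  intros Hr. destruct (sigma_spec r Hr) as [HS _]. destruct (lambda_spec r Hr) as [HL _].
  destruct (sigma_le r Hr) as (_ & HS1 & _). pose proof (sigma_cube_le r Hr).
  pose proof (gap_pos x y r ltac:(lra)) as Hg.
  pose proof (gauss_gap_le 1 3 x y r Hr) as HE.
  replace (INR (1 + 3) ^ (1 + 3)) with 256 in HE by (simpl; ring).
  change (2 * 3)%nat with 6%nat in HE. rewrite pow_1 in HE.
  assert (HE0 : 0 < gauss x y r) by apply exp_pos.
  assert (HD : 0 < sigma r ^ 2 * lambda r ^ 3) by (apply Rmult_lt_0_compat; apply pow_lt; lra).
  rewrite Rabs_div, Rabs_mult, (Rabs_right (gauss x y r)), (Rabs_right (_ * _)) by lra.
  apply Rdiv_le_cross; [lra | apply pow_lt; lra|].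
  pose proof (abs_le_one_plus_sq (phi r x y)).
  assert (sigma r ^ 6 <= 8 * (sigma r ^ 2 * lambda r ^ 3)).
  { replace (sigma r ^ 6) with (sigma r ^ 2 * (sigma r ^ 3 * sigma r)) by ring.
    replace (8 * (sigma r ^ 2 * lambda r ^ 3)) with (sigma r ^ 2 * (8 * lambda r ^ 3)) by ring.
    apply Rmult_le_compat_l; [apply pow2_ge_0|].
    pose proof (pow_lt _ 3 HS). nra. }
  apply Rle_trans with (gauss x y r * (1 + phi r x y ^ 2) * gap x y r ^ 3);
    [|lra].
  replace (gauss x y r * (1 + phi r x y ^ 2) * gap x y r ^ 3)
    with ((1 + phi r x y ^ 2) * (gauss x y r * gap x y r ^ 3)) by ring.
  rewrite Rmult_assoc. apply Rmult_le_compat_r; [pose proof (pow_lt _ 3 Hg); nra | lra].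
Qed.

Definition gap_min (A Y : R) : R := Rmin (A ^ 2 / 4) (A / (2 * Y + 2)).

Lemma gap_min_pos (A Y : R) : 0 < A -> 0 <= Y -> 0 < gap_min A Y.
Proof.
  intros HA HY. apply Rmin_pos; apply Rdiv_lt_0_compat; try apply pow_lt; lra.
Qed.

Lemma gap_ge (A x y r : R) : 0 < A -> A <= Rabs (x - y) -> 0 < r < 1 ->
  gap_min A (Rabs y) <= gap x y r.
Proof.
  intros HA HAxy Hr. pose proof (Rabs_pos y). pose proof (pow2_ge_0 (x - r * y)).
  unfold gap, gap_min.
  destruct (Rle_lt_dec (1 - r) (A / (2 * Rabs y + 2))) as [Hnear|Hfar].
  - apply Rle_trans with (A ^ 2 / 4); [apply Rmin_l|].
    assert ((1 - r) * Rabs y <= A / 2).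
    { apply Rle_trans with (A / (2 * Rabs y + 2) * Rabs y); [apply Rmult_le_compat_r; lra|].
      replace (A / (2 * Rabs y + 2) * Rabs y) with (A * Rabs y / (2 * Rabs y + 2))
        by (field; lra).
      apply Rdiv_le_cross; nra. }
    pose proof (abs_sub_mul_ge x y r ltac:(lra)).
    replace (A ^ 2 / 4) with ((A / 2) ^ 2) by field.
    pose proof (sq_ge_of_abs_ge (A / 2) (x - r * y) ltac:(lra) ltac:(lra)). lra.
  - apply Rle_trans with (A / (2 * Rabs y + 2)); [apply Rmin_r | lra].
Qed.

(** * The inner integral *)

Lemma bulk_improper_exists (x y : R) : x <> y -> exists l, improper_int01 (bulk x y) l.
Proof.
  intros Hxy. assert (HA : 0 < Rabs (x - y)) by (apply Rabs_pos_lt; lra).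
  pose proof (gap_min_pos _ _ HA (Rabs_pos y)) as Hm.
  apply (improper_int01_exists _ (16 / gap_min (Rabs (x - y)) (Rabs y) ^ 2));
    [apply bulk_continuity_pt|].
  intros r Hr. destruct (bulk_le x y r Hr) as [H0 H1]. split; [exact H0|].
  eapply Rle_trans; [exact H1|]. apply Rdiv_pow_antitone; [lra | exact Hm|].
  now apply gap_ge.
Qed.

Lemma boundary_le_gap_min (x y r m : R) : 0 < r < 1 -> 0 < m -> m <= gap x y r ->
  0 <= boundary x y r <= 16 * r / m ^ 2 /\ boundary x y r <= 16 * (1 - r) / m ^ 2.
Proof.
  intros Hr Hm Hg. destruct (boundary_le x y r Hr) as [Hb0 Hb1].
  pose proof (Rdiv_pow_antitone (16 * r * (1 - r)) m (gap x y r) 2 ltac:(nra) Hm Hg).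
  pose proof (pow_lt _ 2 Hm).
  assert (16 * r * (1 - r) / m ^ 2 <= 16 * r / m ^ 2)
    by (apply Rdiv_le_cross; [lra | lra | apply Rmult_le_compat_r; nra]).
  assert (16 * r * (1 - r) / m ^ 2 <= 16 * (1 - r) / m ^ 2)
    by (apply Rdiv_le_cross; [lra | lra | apply Rmult_le_compat_r; nra]).
  repeat split; lra.
Qed.

Lemma integral01_kernel (x y l : R) :
  x <> y -> improper_int01 (bulk x y) l -> integral01 (kernel x y) l.
Proof.
  intros Hxy Hl. assert (HA : 0 < Rabs (x - y)) by (apply Rabs_pos_lt; lra).
  set (m := gap_min (Rabs (x - y)) (Rabs y)).
  assert (Hm : 0 < m) by apply (gap_min_pos _ _ HA (Rabs_pos y)).
  assert (Hgap : forall r, 0 < r < 1 -> m <= gap x y r) by (intros; now apply gap_ge).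
  split; [|split].
  - intros u v Hu Huv Hv. constructor.
    apply Riemann_integrable_open01; auto. apply kernel_continuity_pt.
  - exists (108 * (1 + Rabs y) / m ^ 2). intros u v pr Hu Huv Hv.
    assert (HK : 0 <= 108 * (1 + Rabs y) / m ^ 2)
      by (apply Rlt_le, Rdiv_lt_0_compat; [pose proof (Rabs_pos y) | apply pow_lt]; lra).
    destruct (RiemannInt_const_bound (l := 0) (u := 108 * (1 + Rabs y) / m ^ 2) pr Huv)
      as [_ Hb].
    { intros t Ht. split; [apply Rabs_pos|].
      eapply Rle_trans; [apply kernel_abs_le; lra|].
      apply Rdiv_pow_antitone; [pose proof (Rabs_pos y); lra | lra | apply Hgap; lra]. }
    nra.
  - intros eps Heps. destruct (Hl (eps / 2)) as [d [Hd Hdd]]; [lra|].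
    pose proof (Rmin_l (Rmin d (1 / 2)) (eps * m ^ 2 / 64)).
    pose proof (Rmin_r (Rmin d (1 / 2)) (eps * m ^ 2 / 64)).
    pose proof (Rmin_l d (1 / 2)). pose proof (Rmin_r d (1 / 2)).
    set (delta := Rmin (Rmin d (1 / 2)) (eps * m ^ 2 / 64)) in *.
    assert (Hdelta : 0 < delta /\ 32 * delta / m ^ 2 <= eps / 2).
    { pose proof (pow_lt _ 2 Hm).
      split; [repeat apply Rmin_pos; try apply Rdiv_lt_0_compat; try apply Rmult_lt_0_compat; lra|].
      apply Rle_div_l; [lra|].
      replace (eps / 2 * m ^ 2) with (32 * (eps * m ^ 2 / 64)) by field. lra. }
    exists delta. split; [lra|]. intros u v pr Hu Hud Hvd Hv.
    assert (Huv : u <= v) by lra.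
    pose proof (Riemann_integrable_open01 _ u v (bulk_continuity_pt x y) Hu Huv Hv) as prb.
    rewrite (RiemannInt_kernel x y u v pr prb Hu Huv Hv).
    specialize (Hdd u v prb Hu ltac:(lra) ltac:(lra) Hv).
    destruct (boundary_le_gap_min x y u m ltac:(lra) Hm (Hgap u ltac:(lra))) as [[Bu0 Bu1] _].
    destruct (boundary_le_gap_min x y v m ltac:(lra) Hm (Hgap v ltac:(lra))) as [[Bv0 _] Bv1].
    assert (16 * u / m ^ 2 + 16 * (1 - v) / m ^ 2 <= 32 * delta / m ^ 2).
    { unfold Rdiv. rewrite <- Rmult_plus_distr_r. apply Rmult_le_compat_r;
        [apply Rlt_le, Rinv_0_lt_compat, pow_lt|]; lra. }
    apply Rabs_def2 in Hdd. apply Rabs_def1; lra.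
Qed.

Lemma bulk_lipschitz (x1 x2 y r m : R) : 0 < r < 1 -> 0 < m ->
  (forall x, Rmin x1 x2 <= x <= Rmax x1 x2 -> m <= gap x y r) ->
  Rabs (bulk x1 y r - bulk x2 y r) <= 2048 / m ^ 3 * Rabs (x1 - x2).
Proof.
  intros Hr Hm Hgap.
  set (df := fun x => phi r x y * gauss x y r / (sigma r ^ 2 * lambda r ^ 3)).
  destruct (MVT_gen (fun x => bulk x y r) x2 x1 df) as [c [Hc Hmvt]].
  - intros x _. apply bulk_derive_x, Hr.
  - intros x _. apply ex_derive_continuity_pt. eexists. apply bulk_derive_x, Hr.
  - rewrite Hmvt, Rabs_mult.
    apply Rmult_le_compat_r; [apply Rabs_pos|].
    eapply Rle_trans; [apply bulk_dx_abs_le, Hr|].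
    apply Rdiv_pow_antitone; [lra | exact Hm|]. apply Hgap.
    rewrite Rmin_comm, Rmax_comm. exact Hc.
Qed.

Lemma int01_bulk_lipschitz (x1 x2 y A : R) : 0 < A ->
  (forall x, Rmin x1 x2 <= x <= Rmax x1 x2 -> A <= Rabs (x - y)) ->
  Rabs (int01 (bulk x1 y) - int01 (bulk x2 y))
    <= 2048 / gap_min A (Rabs y) ^ 3 * Rabs (x1 - x2).
Proof.
  intros HA Hseg. pose proof (gap_min_pos A (Rabs y) HA (Rabs_pos y)) as Hm.
  assert (Hne : forall x, Rmin x1 x2 <= x <= Rmax x1 x2 -> x <> y).
  { intros x Hx ->. specialize (Hseg y Hx). rewrite Rminus_diag, Rabs_R0 in Hseg. lra. }
  assert (Hx1 : Rmin x1 x2 <= x1 <= Rmax x1 x2) by (split; [apply Rmin_l | apply Rmax_l]).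
  assert (Hx2 : Rmin x1 x2 <= x2 <= Rmax x1 x2) by (split; [apply Rmin_r | apply Rmax_r]).
  apply (improper_int01_dist_le (bulk x1 y) (bulk x2 y));
    [apply bulk_continuity_pt | apply bulk_continuity_pt
    | apply int01_spec, bulk_improper_exists, Hne, Hx1
    | apply int01_spec, bulk_improper_exists, Hne, Hx2 |].
  intros u v pr1 pr2 Hu Huv Hv.
  assert (HL : 0 <= 2048 / gap_min A (Rabs y) ^ 3 * Rabs (x1 - x2))
    by (apply Rmult_le_pos; [apply Rlt_le, Rdiv_lt_0_compat, pow_lt | apply Rabs_pos]; lra).
  eapply Rle_trans;
    [apply (RiemannInt_dist_le _ _ _ _ (2048 / gap_min A (Rabs y) ^ 3 * Rabs (x1 - x2))
              pr1 pr2 Huv)|].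
  - intros t Ht. apply bulk_lipschitz; [lra | exact Hm|].
    intros x Hx. apply gap_ge; [exact HA | now apply Hseg | lra].
  - rewrite <- (Rmult_1_r (2048 / _ * _)) at 2. apply Rmult_le_compat_l; lra.
Qed.

Lemma int01_bulk_continuity_pt (x y A : R) : 0 < A -> 2 * A <= Rabs (x - y) ->
  continuity_pt (fun z => int01 (bulk z y)) x.
Proof.
  intros HA Hx.
  apply (continuity_pt_of_local_lipschitz _ x (2048 / gap_min A (Rabs y) ^ 3) A);
    [apply Rlt_le, Rdiv_lt_0_compat, pow_lt, gap_min_pos; [lra | lra | apply Rabs_pos]
    | exact HA |].
  intros z Hz. apply int01_bulk_lipschitz; [exact HA|]. intros x' Hx'.
  assert (Hx'x : Rabs (x' - x) < A).
  { apply Rabs_def2 in Hz. apply Rabs_def1; unfold Rmin, Rmax in Hx'; destruct (Rle_dec z x); lra. }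
  pose proof (Rabs_triang_inv (x - y) (x - x')).
  replace (x - y - (x - x')) with (x' - y) in * by ring.
  rewrite Rabs_minus_sym in Hx'x. lra.
Qed.

(** * Size of the inner integral *)

Lemma near_antiderivative (b t : R) : 0 < b -> t < 1 ->
  is_derive (fun s => 16 / (1 - s + b)) t (16 / (1 - t + b) ^ 2).
Proof. intros Hb Ht. auto_derive; [lra|]. field. lra. Qed.

Lemma near_part_continuity_pt (b t : R) : 0 < b -> t < 1 ->
  continuity_pt (fun s => 16 / (1 - s + b) ^ 2) t.
Proof. intros Hb Ht. apply ex_derive_continuity_pt. auto_derive. apply Rgt_not_eq. nra. Qed.

Lemma near_antiderivative_diff_le (b u v : R) : 0 < b -> u < 1 -> v < 1 ->
  16 / (1 - v + b) - 16 / (1 - u + b) <= 16 / b.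
Proof.
  intros Hb Hu Hv. assert (0 < 16 / (1 - u + b)) by (apply Rdiv_lt_0_compat; lra).
  assert (16 / (1 - v + b) <= 16 / b) by (apply Rdiv_le_cross; lra). lra.
Qed.

Lemma far_antiderivative (q x y t : R) : 0 < q -> y <> 0 ->
  is_derive (fun s => - 16 * (x - s * y) / (q ^ 3 * y * sqrt (q ^ 2 + (x - s * y) ^ 2))) t
    (16 / (q * (q ^ 2 + (x - t * y) ^ 2) * sqrt (q ^ 2 + (x - t * y) ^ 2))).
Proof.
  intros Hq Hy. set (w := x - t * y).
  assert (HP : 0 < q ^ 2 + w ^ 2) by (pose proof (pow2_ge_0 w); pose proof (pow_lt q 2 Hq); lra).
  assert (HQ : 0 < sqrt (q ^ 2 + w ^ 2)) by (apply sqrt_lt_R0; lra).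
  assert (HQ2 : sqrt (q ^ 2 + w ^ 2) ^ 2 = q ^ 2 + w ^ 2)
    by (rewrite <- Rsqr_pow2; apply Rsqr_sqrt; lra).
  auto_derive; change (q * (q * 1) + (x + - (t * y)) * ((x + - (t * y)) * 1))
    with (q ^ 2 + w ^ 2);
    [repeat split; [lra|]; repeat apply Rmult_integral_contrapositive_currified; lra|].
  set (Q := sqrt (q ^ 2 + w ^ 2)) in *. change (x + - (t * y)) with w.
  rewrite <- HQ2. field_simplify_eq; [rewrite HQ2; ring | repeat split; lra].
Qed.

Lemma far_part_continuity_pt (q x y t : R) : 0 < q ->
  continuity_pt (fun s => 16 / (q * (q ^ 2 + (x - s * y) ^ 2) * sqrt (q ^ 2 + (x - s * y) ^ 2))) t.
Proof.
  intros Hq. assert (HP : 0 < q ^ 2 + (x - t * y) ^ 2)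
    by (pose proof (pow2_ge_0 (x - t * y)); pose proof (pow_lt q 2 Hq); lra).
  apply ex_derive_continuity_pt. auto_derive.
  change (q * (q * 1) + (x + - (t * y)) * ((x + - (t * y)) * 1)) with (q ^ 2 + (x - t * y) ^ 2).
  pose proof (sqrt_lt_R0 _ HP). repeat split; [lra|]. apply Rgt_not_eq.
  repeat apply Rmult_lt_0_compat; lra.
Qed.

Lemma far_antiderivative_abs_le (q x y t : R) : 0 < q -> y <> 0 ->
  Rabs (- 16 * (x - t * y) / (q ^ 3 * y * sqrt (q ^ 2 + (x - t * y) ^ 2)))
    <= 16 / (q ^ 3 * Rabs y).
Proof.
  intros Hq Hy. set (w := x - t * y).
  assert (HQ : 0 < sqrt (q ^ 2 + w ^ 2))
    by (apply sqrt_lt_R0; pose proof (pow2_ge_0 w); pose proof (pow_lt q 2 Hq); lra).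
  assert (Hw : Rabs w <= sqrt (q ^ 2 + w ^ 2)).
  { rewrite <- sqrt_Rsqr_abs. apply sqrt_le_1_alt. rewrite Rsqr_pow2.
    pose proof (pow_lt q 2 Hq). lra. }
  assert (Hq3 : 0 < q ^ 3) by (apply pow_lt; lra).
  assert (HY : 0 < Rabs y) by (apply Rabs_pos_lt; lra).
  rewrite Rabs_div, !Rabs_mult, Rabs_left, (Rabs_right (q ^ 3)), (Rabs_right (sqrt _))
    by (try apply Rmult_integral_contrapositive_currified;
        try apply Rmult_integral_contrapositive_currified; lra).
  apply Rdiv_le_cross; [apply Rmult_lt_0_compat; [apply Rmult_lt_0_compat|]; lra | nra|].
  assert (0 <= q ^ 3 * Rabs y * (sqrt (q ^ 2 + w ^ 2) - Rabs w))
    by (apply Rmult_le_pos; nra).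
  nra.
Qed.

Lemma inv_gap_sq_le_far (e w q : R) : 0 < q -> q ^ 2 <= e ->
  16 / (e + w ^ 2) ^ 2 <= 16 / (q * (q ^ 2 + w ^ 2) * sqrt (q ^ 2 + w ^ 2)).
Proof.
  intros Hq He.
  assert (HP : 0 < q ^ 2 + w ^ 2) by (pose proof (pow2_ge_0 w); pose proof (pow_lt q 2 Hq); lra).
  assert (HQ : q <= sqrt (q ^ 2 + w ^ 2)).
  { rewrite <- (sqrt_pow2 q) at 1 by lra. apply sqrt_le_1_alt. pose proof (pow2_ge_0 w); lra. }
  assert (HQ2 : sqrt (q ^ 2 + w ^ 2) ^ 2 = q ^ 2 + w ^ 2)
    by (rewrite <- Rsqr_pow2; apply Rsqr_sqrt; lra).
  apply Rdiv_le_cross;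
    [apply pow_lt; lra | apply Rmult_lt_0_compat; [apply Rmult_lt_0_compat|]; lra|].
  apply Rmult_le_compat_l; [lra|].
  apply Rle_trans with ((q ^ 2 + w ^ 2) ^ 2); [|apply pow_incr; lra].
  replace ((q ^ 2 + w ^ 2) ^ 2) with ((q ^ 2 + w ^ 2) * sqrt (q ^ 2 + w ^ 2) ^ 2)
    by (rewrite HQ2; ring).
  replace (q * (q ^ 2 + w ^ 2) * sqrt (q ^ 2 + w ^ 2))
    with ((q ^ 2 + w ^ 2) * (q * sqrt (q ^ 2 + w ^ 2))) by ring.
  apply Rmult_le_compat_l; [lra|].
  replace (sqrt (q ^ 2 + w ^ 2) ^ 2) with (sqrt (q ^ 2 + w ^ 2) * sqrt (q ^ 2 + w ^ 2)) by ring.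
  apply Rmult_le_compat_r; lra.
Qed.

Lemma RiemannInt_bulk_le_near (x y a u v : R) (pr : Riemann_integrable (bulk x y) u v) :
  0 < a -> a <= Rabs (x - y) -> Rabs y <= a / 2 -> 0 < u -> u <= v -> v < 1 ->
  RiemannInt pr <= 64 / a ^ 2.
Proof.
  intros Ha Hxy HY Hu Huv Hv. assert (Hb : 0 < (a / 2) ^ 2) by (apply pow_lt; lra).
  eapply Rle_trans.
  - apply (RiemannInt_le_antiderivative _ (fun s => 16 / (1 - s + (a / 2) ^ 2) ^ 2)
             (fun s => 16 / (1 - s + (a / 2) ^ 2)) u v pr Huv).
    + intros t Ht. apply near_part_continuity_pt; lra.
    + intros t Ht. apply near_antiderivative; lra.
    + intros t Ht. eapply Rle_trans; [apply bulk_le; lra|].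
      apply Rdiv_pow_antitone; [lra | lra | unfold gap].
      pose proof (abs_sub_mul_ge x y t ltac:(lra)). pose proof (Rabs_pos y).
      assert ((a / 2) ^ 2 <= (x - t * y) ^ 2) by (apply sq_ge_of_abs_ge; nra). lra.
  - replace (64 / a ^ 2) with (16 / (a / 2) ^ 2) by (field; lra).
    apply near_antiderivative_diff_le; lra.
Qed.

Lemma RiemannInt_bulk_le_far (x y a q u v : R) (pr : Riemann_integrable (bulk x y) u v) :
  0 < a -> a <= Rabs (x - y) -> a / 2 < Rabs y -> 0 < q -> q ^ 2 = a / (2 * Rabs y) ->
  0 < u -> u <= v -> v < 1 ->
  RiemannInt pr <= 64 / a ^ 2 + 32 / (q ^ 3 * Rabs y).
Proof.
  intros Ha Hxy HY Hq Hq2 Hu Huv Hv.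
  assert (Hy : y <> 0) by (intros ->; rewrite Rabs_R0 in HY; lra).
  assert (Hb : 0 < (a / 2) ^ 2) by (apply pow_lt; lra).
  set (g1 := fun s => 16 / (1 - s + (a / 2) ^ 2) ^ 2).
  set (G1 := fun s => 16 / (1 - s + (a / 2) ^ 2)).
  set (g2 := fun s => 16 / (q * (q ^ 2 + (x - s * y) ^ 2) * sqrt (q ^ 2 + (x - s * y) ^ 2))).
  set (G2 := fun s => - 16 * (x - s * y) / (q ^ 3 * y * sqrt (q ^ 2 + (x - s * y) ^ 2))).
  eapply Rle_trans.
  - apply (RiemannInt_le_antiderivative _ (fun s => g1 s + g2 s) (fun s => G1 s + G2 s)
             u v pr Huv).
    + intros t Ht. apply continuity_pt_plus;
        [apply near_part_continuity_pt | apply far_part_continuity_pt]; lra.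
    + intros t Ht. apply (is_derive_plus G1 G2);
        [apply near_antiderivative | apply far_antiderivative]; lra.
    + intros t Ht.
      assert (Hg1 : 0 <= g1 t) by (apply Rlt_le, Rdiv_lt_0_compat, pow_lt; lra).
      assert (Hg2 : 0 <= g2 t).
      { assert (HP : 0 < q ^ 2 + (x - t * y) ^ 2)
          by (pose proof (pow2_ge_0 (x - t * y)); pose proof (pow_lt q 2 Hq); lra).
        pose proof (sqrt_lt_R0 _ HP).
        apply Rlt_le, Rdiv_lt_0_compat; [lra | repeat apply Rmult_lt_0_compat; lra]. }
      eapply Rle_trans; [apply bulk_le; lra|]. unfold gap.
      destruct (Rle_dec (a / 2) (Rabs (x - t * y))) as [Hw|Hw].
      * assert (16 / (1 - t + (x - t * y) ^ 2) ^ 2 <= g1 t)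
          by (apply Rdiv_pow_antitone; [lra | lra |];
              pose proof (sq_ge_of_abs_ge (a / 2) (x - t * y) ltac:(lra) Hw); lra).
        lra.
      * assert (16 / (1 - t + (x - t * y) ^ 2) ^ 2 <= g2 t).
        { apply inv_gap_sq_le_far; [exact Hq|]. rewrite Hq2.
          pose proof (abs_sub_mul_ge x y t ltac:(lra)).
          apply Rle_div_l; nra. }
        lra.
  - pose proof (near_antiderivative_diff_le ((a / 2) ^ 2) u v Hb ltac:(lra) Hv).
    replace (16 / (a / 2) ^ 2) with (64 / a ^ 2) in H by (field; lra).
    pose proof (far_antiderivative_abs_le q x y u Hq Hy) as Bu.
    pose proof (far_antiderivative_abs_le q x y v Hq Hy) as Bv.
    change (Rabs (G2 u) <= 16 / (q ^ 3 * Rabs y)) in Bu.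
    change (Rabs (G2 v) <= 16 / (q ^ 3 * Rabs y)) in Bv.
    change (G1 v - G1 u <= 64 / a ^ 2) in H.
    pose proof (Rle_abs (G2 v)). pose proof (Rle_abs (- G2 u)). rewrite Rabs_Ropp in *.
    replace (32 / (q ^ 3 * Rabs y)) with (16 / (q ^ 3 * Rabs y) + 16 / (q ^ 3 * Rabs y))
      by (field; pose proof (Rabs_pos_lt y Hy); split; lra).
    lra.
Qed.

Definition tail_bound (a rB : R) : R := 64 / a ^ 2 + 128 / (a * sqrt (a * rB)).

Lemma far_constant_le (a Y q rB : R) : 0 < rB -> 0 < a -> 0 < Y -> Y * rB <= 2 ->
  0 < q -> q ^ 2 = a / (2 * Y) -> 32 / (q ^ 3 * Y) <= 128 / (a * sqrt (a * rB)).
Proof.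
  intros HrB Ha HY HYr Hq Hq2.
  assert (Hsq : sqrt (a * rB) <= 2 * q).
  { rewrite <- (sqrt_pow2 (2 * q)) by lra. apply sqrt_le_1_alt.
    replace ((2 * q) ^ 2) with (4 * q ^ 2) by ring. rewrite Hq2.
    replace (4 * (a / (2 * Y))) with (2 * a / Y) by (field; lra).
    apply (Rle_div_r (a * rB) (2 * a) Y); [lra|].
    assert (a * (Y * rB) <= a * 2) by (apply Rmult_le_compat_l; lra). lra. }
  assert (HS : 0 < sqrt (a * rB)) by (apply sqrt_lt_R0; nra).
  replace (q ^ 3 * Y) with (q * (a / 2)) by (replace (q ^ 3) with (q * q ^ 2) by ring;
                                            rewrite Hq2; field; lra).
  apply Rdiv_le_cross; [nra | nra |]. nra.
Qed.

Lemma RiemannInt_bulk_le (x y rB u v : R) (pr : Riemann_integrable (bulk x y) u v) :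
  0 < rB -> rB < Rabs (x - y) -> Rabs y * rB <= 2 -> 0 < u -> u <= v -> v < 1 ->
  RiemannInt pr <= tail_bound (Rabs (x - y)) rB.
Proof.
  intros HrB Ha HY Hu Huv Hv. set (a := Rabs (x - y)) in *.
  assert (Hfar : 0 <= 128 / (a * sqrt (a * rB)))
    by (apply Rlt_le, Rdiv_lt_0_compat; [|apply Rmult_lt_0_compat, sqrt_lt_R0]; nra).
  unfold tail_bound. destruct (Rle_dec (Rabs y) (a / 2)) as [Hnear|Hnear].
  - pose proof (RiemannInt_bulk_le_near x y a u v pr ltac:(lra) ltac:(unfold a; lra)
                  Hnear Hu Huv Hv).
    lra.
  - assert (HYa : 0 < a / (2 * Rabs y)) by (apply Rdiv_lt_0_compat; lra).
    set (q := sqrt (a / (2 * Rabs y))).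
    assert (Hq : 0 < q) by (apply sqrt_lt_R0; lra).
    assert (Hq2 : q ^ 2 = a / (2 * Rabs y)) by (apply pow2_sqrt; lra).
    pose proof (RiemannInt_bulk_le_far x y a q u v pr ltac:(lra) ltac:(unfold a; lra)
                  ltac:(lra) Hq Hq2 Hu Huv Hv).
    pose proof (far_constant_le a (Rabs y) q rB HrB ltac:(lra) ltac:(lra) HY Hq Hq2).
    lra.
Qed.

Lemma int01_bulk_abs_le (x y rB : R) :
  0 < rB -> rB < Rabs (x - y) -> Rabs y * rB <= 2 ->
  Rabs (int01 (bulk x y)) <= tail_bound (Rabs (x - y)) rB.
Proof.
  intros HrB Ha HY.
  assert (Hxy : x <> y) by (intros ->; rewrite Rminus_diag, Rabs_R0 in Ha; lra).
  apply (improper_int01_abs_le (bulk x y)); [apply bulk_continuity_pt | |].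
  - now apply int01_spec, bulk_improper_exists.
  - intros u v pr Hu Huv Hv. rewrite Rabs_right.
    + now apply RiemannInt_bulk_le.
    + apply Rle_ge, RiemannInt_ge0; [exact Huv|]. intros t Ht. apply bulk_le. lra.
Qed.

(** * Integration over the complement of 2B *)

Lemma tail_bound_antitone (a t rB : R) : 0 < rB -> 0 < t <= a ->
  tail_bound a rB <= tail_bound t rB.
Proof.
  intros HrB Ht. unfold tail_bound.
  assert (Hs1 : 0 < sqrt (t * rB)) by (apply sqrt_lt_R0; nra).
  assert (Hs2 : sqrt (t * rB) <= sqrt (a * rB)) by (apply sqrt_le_1_alt; nra).
  apply Rplus_le_compat.
  - apply Rdiv_pow_antitone; lra.
  - apply Rdiv_le_cross; [nra | nra | apply Rmult_le_compat_l; [lra | apply Rmult_le_compat; lra]].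
Qed.

Lemma tail_antiderivative (rB c s x : R) : 0 < rB -> s * s = 1 -> 0 < s * (x - c) - rB ->
  is_derive (fun z => s * (- (64 / (s * (z - c) - rB)) - 256 / sqrt ((s * (z - c) - rB) * rB)))
    x (tail_bound (s * (x - c) - rB) rB).
Proof.
  intros HrB Hs Ht. set (t := s * (x - c) - rB) in *.
  assert (HS : 0 < sqrt (t * rB)) by (apply sqrt_lt_R0; nra).
  assert (HS2 : sqrt (t * rB) ^ 2 = t * rB) by (apply pow2_sqrt; nra).
  auto_derive; change (s * (x + - c) + - rB) with t; [repeat split; nra|].
  unfold tail_bound. field_simplify_eq; [|repeat split; nra].
  replace (s ^ 2) with 1 by (rewrite <- Hs; ring). rewrite HS2. ring.
Qed.

Lemma tail_primitive_bounds (rB t : R) : 0 < rB -> rB <= t ->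
  - (320 / rB) <= - (64 / t) - 256 / sqrt (t * rB) <= 0.
Proof.
  intros HrB Ht. assert (HS : rB <= sqrt (t * rB)).
  { rewrite <- (sqrt_pow2 rB) at 1 by lra. apply sqrt_le_1_alt. nra. }
  assert (0 < 64 / t) by (apply Rdiv_lt_0_compat; lra).
  assert (0 < 256 / sqrt (t * rB)) by (apply Rdiv_lt_0_compat; lra).
  assert (64 / t <= 64 / rB) by (apply Rdiv_le_cross; nra).
  assert (256 / sqrt (t * rB) <= 256 / rB) by (apply Rdiv_le_cross; nra).
  replace (320 / rB) with (64 / rB + 256 / rB) by (field; lra). lra.
Qed.

(* Reflecting by [s = -1] covers the part of the complement of [2B] left of [B]. *)
Lemma RiemannInt_tail_le (F : R -> R) (c rB y s u v : R) (pr : Riemann_integrable F u v) :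
  s = 1 \/ s = -1 -> 0 < rB -> Rabs (y - c) < rB -> u <= v ->
  (forall x, u <= x <= v -> 2 * rB <= s * (x - c)) ->
  (forall x, u < x < v -> F x <= tail_bound (Rabs (x - y)) rB) ->
  RiemannInt pr <= 320 / rB.
Proof.
  intros Hs HrB Hy Huv Hout HF.
  assert (Hs2 : s * s = 1) by (destruct Hs; subst; ring).
  assert (Habs : Rabs s = 1) by (destruct Hs; subst; [apply Rabs_R1 | rewrite Rabs_left; lra]).
  set (T := fun t => - (64 / t) - 256 / sqrt (t * rB)).
  assert (Hcont : forall x, u <= x <= v ->
            continuity_pt (fun z => tail_bound (s * (z - c) - rB) rB) x).
  { intros x Hx. specialize (Hout x Hx). apply ex_derive_continuity_pt.
    unfold tail_bound. auto_derive. repeat split; try nra.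
    all: apply Rgt_not_eq; try apply Rmult_lt_0_compat; try apply sqrt_lt_R0; nra. }
  assert (Hder : forall x, u <= x <= v ->
            is_derive (fun z => s * T (s * (z - c) - rB)) x (tail_bound (s * (x - c) - rB) rB)).
  { intros x Hx. specialize (Hout x Hx). apply tail_antiderivative; lra. }
  assert (Hle : forall x, u < x < v -> F x <= tail_bound (s * (x - c) - rB) rB).
  { intros x Hx. eapply Rle_trans; [apply HF, Hx|].
    specialize (Hout x ltac:(lra)). apply tail_bound_antitone; [lra|]. split; [lra|].
    pose proof (Rle_abs (s * (y - c))). pose proof (Rle_abs (s * (x - y))).
    rewrite Rabs_mult, Habs, Rmult_1_l in *. lra. }
  eapply Rle_trans; [apply (RiemannInt_le_antiderivative _ _ _ u v pr Huv Hcont Hder Hle)|].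
  pose proof (tail_primitive_bounds rB (s * (u - c) - rB) HrB ltac:(specialize (Hout u); lra)).
  pose proof (tail_primitive_bounds rB (s * (v - c) - rB) HrB ltac:(specialize (Hout v); lra)).
  unfold T. destruct Hs; subst; lra.
Qed.

Lemma admissible_abs_mul_le (c rB y : R) :
  admissible c rB -> Rabs (y - c) < rB -> Rabs y * rB <= 2.
Proof.
  intros (HrB & HrB1 & HrBc) Hy. pose proof (Rabs_triang c (y - c)) as T.
  replace (c + (y - c)) with y in T by ring. nra.
Qed.

Lemma dist_gt_of_outside_double_ball (c rB x y : R) :
  Rabs (y - c) < rB -> 2 * rB <= Rabs (x - c) -> rB < Rabs (x - y).
Proof.
  intros Hy Hx. pose proof (Rabs_triang (x - y) (y - c)) as T.
  replace (x - y + (y - c)) with (x - c) in T by ring. lra.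
Qed.

Theorem mainTheorem4 :
  forall D : R -> R -> R -> R,
  (forall r x y, 0 < r < 1 ->
     derivable_pt_lim (fun y' => psi r x y' * exp (- (phi r x y') ^ 2)) y (D r x y)) ->
  exists C : R,
  forall c rB : R, admissible c rB ->
  forall y : R, Rabs (y - c) < rB ->
  exists I : R -> R,
    (forall x, 2 * rB <= Rabs (x - c) ->
       integral01 (fun r => r * D r x y / (1 - r ^ 2) * rho_density r) (I x)) /\
    (forall u v, u <= v -> (v <= c - 2 * rB \/ c + 2 * rB <= u) ->
       inhabited (Riemann_integrable (fun x => Rabs (I x)) u v)) /\
    (forall u1 v1 u2 v2
       (p1 : Riemann_integrable (fun x => Rabs (I x)) u1 v1)
       (p2 : Riemann_integrable (fun x => Rabs (I x)) u2 v2),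
       u1 <= v1 -> v1 <= c - 2 * rB -> c + 2 * rB <= u2 -> u2 <= v2 ->
       rB * (RiemannInt p1 + RiemannInt p2) <= C).
Proof.
  intros D HD. exists 640. intros c rB Hadm y Hy. pose proof Hadm as (HrB & _ & _).
  pose proof (admissible_abs_mul_le c rB y Hadm Hy) as HY.
  assert (Hfar : forall x, 2 * rB <= Rabs (x - c) -> rB < Rabs (x - y))
    by (intros x Hx; now apply (dist_gt_of_outside_double_ball c)).
  assert (Hout : forall x, x <= c - 2 * rB \/ c + 2 * rB <= x -> 2 * rB <= Rabs (x - c)).
  { intros x [Hx|Hx]; [rewrite Rabs_left1 | rewrite Rabs_right]; lra. }
  exists (fun x => int01 (bulk x y)). split; [|split].
  - intros x Hx. pose proof (Hfar x Hx) as Hxy.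
    assert (Hne : x <> y) by (intros ->; rewrite Rminus_diag, Rabs_R0 in Hxy; lra).
    apply (integral01_ext (kernel x y)); [intros r Hr; now apply kernel_eq_integrand|].
    now apply integral01_kernel, int01_spec, bulk_improper_exists.
  - intros u v Huv Hside. constructor. apply continuity_implies_RiemannInt; [exact Huv|].
    intros x Hx.
    apply (continuity_pt_comp (fun z => int01 (bulk z y)) Rabs); [|apply Rcontinuity_abs].
    apply (int01_bulk_continuity_pt x y (rB / 2)); [lra|].
    pose proof (Hfar x (Hout x ltac:(lra))). lra.
  - intros u1 v1 u2 v2 p1 p2 H1 H2 H3 H4.
    assert (Hbound : forall x, x <= c - 2 * rB \/ c + 2 * rB <= x ->
              Rabs (int01 (bulk x y)) <= tail_bound (Rabs (x - y)) rB)
      by (intros x Hx; apply int01_bulk_abs_le; auto).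
    pose proof (RiemannInt_tail_le _ c rB y (-1) u1 v1 p1 ltac:(lra) HrB Hy H1
                  ltac:(intros; lra) ltac:(intros; apply Hbound; lra)).
    pose proof (RiemannInt_tail_le _ c rB y 1 u2 v2 p2 ltac:(lra) HrB Hy H4
                  ltac:(intros; lra) ltac:(intros; apply Hbound; lra)).
    replace 640 with (rB * (320 / rB + 320 / rB)) by (field; lra).
    apply Rmult_le_compat_l; lra.
Qed.
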